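(* Let $h$ and $k$ be coprime odd integers with $k>0$. Then $$B_{1}(h,k)=\frac{h}{2k}\sum_{\substack{j=1\\ j\neq\frac{k+1}{2}}}^{k}\tan\left(\frac{\pi h(2j-1)}{2k}\right)\cot\left(\frac{\pi(2j-1)}{2k}\right)+\frac{1}{2k}-\frac{1}{2}.$$
   Context: $[x]$ denotes the greatest integer $\le x$. For integers $h,k$ with $k>0$ and $\gcd(h,k)=1$, $$B_{1}(h,k)=\sum_{j=1}^{k-1}(-1)^{j+\left[\frac{hj}{k}\right]}\left[\frac{hj}{k}\right].$$ *)

From Stdlib Require Import Reals ZArith Lia.
Open Scope R_scope.

(* [x] = greatest integer <= x; for x = h*j/k with k > 0 this is Z.div (floor division). *)
Definition floorQ (h j k : Z) : Z := (h * j / k)%Z.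

Definition B_one (h k : Z) : Z :=
  List.fold_right Z.add 0%Z
    (List.map (fun n : nat =>
       let j := Z.of_nat n in
       let f := floorQ h j k in
       (if Z.even (j + f) then f else - f)%Z)
     (List.seq 1 (Z.to_nat (k - 1)))).

Definition cot (x : R) : R := cos x / sin x.

Definition tan_cot_sum (h k : Z) : R :=
  List.fold_right Rplus 0
    (List.map (fun n : nat =>
       let j := Z.of_nat n in
       if Z.eqb (2 * j) (k + 1) then 0
       else tan (PI * IZR h * IZR (2 * j - 1) / (2 * IZR k))
            * cot (PI * IZR (2 * j - 1) / (2 * IZR k)))
     (List.seq 1 (Z.to_nat k))).

From Stdlib Require Import Reals ZArith Lia Lra List Permutation.
Open Scope R_scope.

(* Let K = k and x_j = π(2j-1)/(2K). Since cos(K x_j) = 0, both factors are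
   finite Fourier sums: telescoping gives cot x_j = Σ_{b<K} sin(2b x_j) and, K being
   odd, tan(h x_j) = (2/K) Σ_{a<K} (-1)^a a sin(2ah x_j); at the middle node x_j = π/2
   the cotangent sum vanishes, matching the omitted term. Orthogonality of the
   sin(2b x_j) over the nodes collapses the resulting triple sum to
   2 Σ_a (-1)^(a + [ha/K]) a. Writing ha = K[ha/K] + r_a with h, K odd, the sign
   (-1)^(a + [ha/K]) is (-1)^(r_a), and a ↦ r_a permutes 1..K-1; hence
   h Σ_a (-1)^(a+[ha/K]) a - K B_1(h,K) = Σ_r (-1)^r r = (K-1)/2, which rearranges to
   the formula. *)

(** * Finite sums *)

Definition rsum (f : nat -> R) (a n : nat) : R := fold_right Rplus 0 (map f (seq a n)).

Lemma rsum_S_l f a n : rsum f a (S n) = f a + rsum f (S a) n.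
Proof. reflexivity. Qed.

Lemma rsum_S_r f a n : rsum f a (S n) = rsum f a n + f (a + n)%nat.
Proof.
  assert (Hacc : forall (l : list R) c, fold_right Rplus c l = fold_right Rplus 0 l + c).
  { induction l as [|x l IH]; intros c; simpl; [lra | rewrite IH; lra]. }
  unfold rsum; rewrite seq_S, map_app, fold_right_app; simpl.
  rewrite Hacc; lra.
Qed.

Lemma rsum_ext f g a n :
  (forall i, (a <= i < a + n)%nat -> f i = g i) -> rsum f a n = rsum g a n.
Proof.
  revert a; induction n as [|n IH]; intros a H; [reflexivity|].
  rewrite !rsum_S_l, H by lia; f_equal.
  apply IH; intros; apply H; lia.
Qed.

Lemma rsum_add f g a n : rsum (fun i => f i + g i) a n = rsum f a n + rsum g a n.
Proof.
  revert a; induction n as [|n IH]; intros a; [unfold rsum; simpl; lra|].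
  rewrite !rsum_S_l, IH; lra.
Qed.

Lemma rsum_sub f g a n : rsum (fun i => f i - g i) a n = rsum f a n - rsum g a n.
Proof.
  revert a; induction n as [|n IH]; intros a; [unfold rsum; simpl; lra|].
  rewrite !rsum_S_l, IH; lra.
Qed.

Lemma rsum_scal_l c f a n : rsum (fun i => c * f i) a n = c * rsum f a n.
Proof.
  revert a; induction n as [|n IH]; intros a; [unfold rsum; simpl; lra|].
  rewrite !rsum_S_l, IH; lra.
Qed.

Lemma rsum_const c a n : rsum (fun _ => c) a n = INR n * c.
Proof.
  revert a; induction n as [|n IH]; intros a; [unfold rsum; simpl; lra|].
  rewrite rsum_S_l, IH, S_INR; lra.
Qed.

Lemma rsum_eq0 f a n : (forall i, (a <= i < a + n)%nat -> f i = 0) -> rsum f a n = 0.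
Proof.
  intros H; rewrite (rsum_ext f (fun _ => 0)) by auto.
  rewrite rsum_const; lra.
Qed.

Lemma rsum_single f a n i0 : (a <= i0 < a + n)%nat ->
  (forall i, (a <= i < a + n)%nat -> i <> i0 -> f i = 0) -> rsum f a n = f i0.
Proof.
  revert a; induction n as [|n IH]; intros a Hi0 H; [lia|].
  rewrite rsum_S_l; destruct (Nat.eq_dec a i0) as [<-|Hne].
  - rewrite rsum_eq0; [lra|]. intros; apply H; lia.
  - rewrite H, IH by (lia || (intros; apply H; lia)); lra.
Qed.

Lemma rsum_swap (F : nat -> nat -> R) a n b m :
  rsum (fun i => rsum (fun j => F i j) b m) a n = rsum (fun j => rsum (fun i => F i j) a n) b m.
Proof.
  revert a; induction n as [|n IH]; intros a.
  - symmetry; apply rsum_eq0; reflexivity.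
  - rewrite rsum_S_l, IH, <- rsum_add.
    apply rsum_ext; intros; rewrite rsum_S_l; reflexivity.
Qed.

Lemma rsum_mul f g a n b m :
  rsum f a n * rsum g b m = rsum (fun i => rsum (fun j => f i * g j) b m) a n.
Proof.
  rewrite Rmult_comm, <- rsum_scal_l; apply rsum_ext; intros i _.
  rewrite Rmult_comm, <- rsum_scal_l; apply rsum_ext; intros; ring.
Qed.

Lemma rsum_telescope u a n : rsum (fun i => u (S i) - u i) a n = u (a + n)%nat - u a.
Proof.
  revert a; induction n as [|n IH]; intros a.
  - unfold rsum; simpl; rewrite Nat.add_0_r; lra.
  - rewrite rsum_S_l, IH, Nat.add_succ_comm; lra.
Qed.

Lemma rsum_permute (sigma : nat -> nat) f a n :
  (forall i, (a <= i < a + n)%nat -> (a <= sigma i < a + n)%nat) ->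
  (forall i j, (a <= i < a + n)%nat -> (a <= j < a + n)%nat -> sigma i = sigma j -> i = j) ->
  rsum (fun i => f (sigma i)) a n = rsum f a n.
Proof.
  intros Hrange Hinj; unfold rsum.
  rewrite <- (map_map sigma f).
  assert (Hperm : Permutation (map sigma (seq a n)) (seq a n)).
  { apply Permutation_map_same_l.
    - apply FinFun.Injective_map_NoDup_in; [|apply seq_NoDup].
      intros i j Hi Hj; apply in_seq in Hi, Hj; auto.
    - intros z Hz; apply in_map_iff in Hz as [i [<- Hi]]; apply in_seq in Hi.
      apply in_seq, Hrange; exact Hi. }
  apply (Permutation_map f) in Hperm.
  induction Hperm; simpl; lra.
Qed.

(** * Trigonometric identities *)

Definition parity_sign (z : Z) : R := if Z.even z then 1 else -1.

Lemma parity_sign_add x y : parity_sign (x + y) = parity_sign x * parity_sign y.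
Proof.
  unfold parity_sign; rewrite Z.even_add.
  destruct (Z.even x), (Z.even y); simpl; ring.
Qed.

Lemma pow_m1_parity_sign n : (-1) ^ n = parity_sign (Z.of_nat n).
Proof.
  unfold parity_sign; induction n as [|n IH]; [reflexivity|].
  rewrite Nat2Z.inj_succ, Z.even_succ, <- Z.negb_even; simpl pow; rewrite IH.
  destruct (Z.even (Z.of_nat n)); simpl; ring.
Qed.

Lemma sin_IZR_mult_PI n : sin (IZR n * PI) = 0.
Proof. apply sin_eq_0_1; eauto. Qed.

Lemma cos_IZR_mult_PI n : cos (IZR n * PI) = parity_sign n.
Proof.
  unfold parity_sign; destruct (Z.even n) eqn:En.
  - apply Z.even_spec in En as [q ->].
    rewrite mult_IZR, Rmult_assoc, cos_2a_sin, sin_IZR_mult_PI; ring.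
  - assert (Hodd : Z.odd n = true) by (rewrite <- Z.negb_even, En; reflexivity).
    apply Z.odd_spec in Hodd as [q ->].
    rewrite plus_IZR, mult_IZR, Rmult_plus_distr_r, Rmult_1_l, neg_cos, Rmult_assoc.
    rewrite cos_2a_sin, sin_IZR_mult_PI; ring.
Qed.

Lemma cos_odd_mult_PI2 n : Z.odd n = true -> cos (IZR n * PI / 2) = 0.
Proof.
  intros Hodd; apply Z.odd_spec in Hodd as [q ->].
  replace (IZR (2 * q + 1) * PI / 2) with (IZR q * PI + PI / 2)
    by (rewrite plus_IZR, mult_IZR; field).
  rewrite cos_plus, cos_PI2, sin_PI2, sin_IZR_mult_PI; ring.
Qed.

Lemma cos_eq0_double z : cos z = 0 -> cos (2 * z) = -1 /\ sin (2 * z) = 0.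
Proof. intros H; rewrite cos_2a_cos, sin_2a, H; split; ring. Qed.

Lemma sin_mul_rsum_sin (K : nat) x : (1 <= K)%nat -> cos (INR K * x) = 0 ->
  sin x * rsum (fun b => sin (2 * INR b * x)) 1 (K - 1) = cos x.
Proof.
  intros HK Hc; destruct (cos_eq0_double _ Hc) as [Hc2 Hs2].
  set (u i := - cos ((2 * INR i - 1) * x) / 2).
  rewrite <- rsum_scal_l, (rsum_ext _ (fun b => u (S b) - u b)).
  - rewrite rsum_telescope, Nat.add_comm, Nat.sub_add by exact HK.
    unfold u; replace ((2 * INR K - 1) * x) with (2 * (INR K * x) - x) by ring.
    rewrite cos_minus, Hc2, Hs2; simpl INR.
    replace ((2 * 1 - 1) * x) with x by ring; field.
  - intros i _; unfold u; rewrite S_INR.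
    replace ((2 * (INR i + 1) - 1) * x) with (2 * INR i * x + x) by ring.
    replace ((2 * INR i - 1) * x) with (2 * INR i * x - x) by ring.
    rewrite cos_plus, cos_minus; field.
Qed.

Lemma rsum_alt_sin_odd (K : nat) y : cos (INR K * y) = 0 -> cos y <> 0 ->
  rsum (fun a => (-1) ^ a * sin ((2 * INR a + 1) * y)) 0 K = 0.
Proof.
  intros Hc Hy; destruct (cos_eq0_double _ Hc) as [_ Hs2].
  set (u i := - (-1) ^ i * sin (2 * INR i * y)).
  assert (E : 2 * cos y * rsum (fun a => (-1) ^ a * sin ((2 * INR a + 1) * y)) 0 K = 0).
  { rewrite <- rsum_scal_l, (rsum_ext _ (fun a => u (S a) - u a)).
    - rewrite rsum_telescope; unfold u; simpl INR.
      replace (2 * 0 * y) with 0 by ring.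
      rewrite sin_0, Nat.add_0_l, Rmult_assoc, Hs2; ring.
    - intros i _; unfold u; rewrite S_INR; simpl pow.
      replace (2 * (INR i + 1) * y) with (2 * INR i * y + 2 * y) by ring.
      replace ((2 * INR i + 1) * y) with (2 * INR i * y + y) by ring.
      rewrite !sin_plus, sin_2a, cos_2a_cos; ring. }
  apply Rmult_integral in E as [E|E]; [lra | exact E].
Qed.

Lemma tan_as_rsum (K : nat) y : Nat.Odd K -> cos (INR K * y) = 0 -> cos y <> 0 ->
  tan y = 2 / INR K * rsum (fun a => INR a * (-1) ^ a * sin (2 * INR a * y)) 1 (K - 1).
Proof.
  intros [m HKm] Hc Hy; destruct (cos_eq0_double _ Hc) as [Hc2 Hs2].
  assert (HK0 : INR K <> 0) by (apply not_0_INR; lia).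
  assert (Halt := rsum_alt_sin_odd K y Hc Hy).
  replace K with (S (K - 1)) in Halt at 1 by lia.
  rewrite rsum_S_l in Halt; simpl in Halt.
  replace ((2 * 0 + 1) * y) with y in Halt by ring.
  assert (HK : (-1) ^ K = -1) by (rewrite HKm, Nat.add_1_r; apply pow_1_odd).
  set (u i := - (-1) ^ i * INR i * sin ((2 * INR i - 1) * y)).
  assert (Htel : rsum (fun a => INR a * (-1) ^ a * sin (2 * INR a * y)) 1 (K - 1)
                 = / (2 * cos y) * ((u K - u 1%nat) - (- sin y))).
  { assert (Hu : u K - u 1%nat = rsum (fun i => u (S i) - u i) 1 (K - 1))
      by (rewrite rsum_telescope; do 2 f_equal; lia).
    replace (- sin y) with (rsum (fun a => (-1) ^ a * sin ((2 * INR a + 1) * y)) 1 (K - 1))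
      by lra.
    rewrite Hu, <- rsum_sub, <- rsum_scal_l; apply rsum_ext; intros i _; unfold u.
    rewrite S_INR; simpl pow.
    replace ((2 * (INR i + 1) - 1) * y) with (2 * INR i * y + y) by ring.
    replace ((2 * INR i + 1) * y) with (2 * INR i * y + y) by ring.
    replace ((2 * INR i - 1) * y) with (2 * INR i * y - y) by ring.
    rewrite sin_plus, sin_minus; field; exact Hy. }
  rewrite Htel; unfold u, tan; rewrite HK; simpl INR.
  replace ((2 * INR K - 1) * y) with (2 * (INR K * y) - y) by ring.
  replace ((2 * 1 - 1) * y) with y by ring.
  rewrite sin_minus, Hc2, Hs2; field; auto.
Qed.

Lemma sin_mul_rsum_cos_odd (K : nat) t :
  2 * sin t * rsum (fun j => cos ((2 * INR j - 1) * t)) 1 K = sin (2 * INR K * t).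
Proof.
  set (u i := sin (2 * INR i * t - 2 * t)).
  rewrite <- rsum_scal_l, (rsum_ext _ (fun j => u (S j) - u j)).
  - rewrite rsum_telescope; unfold u; rewrite Nat.add_1_l, S_INR; simpl INR.
    replace (2 * 1 * t - 2 * t) with 0 by ring.
    replace (2 * (INR K + 1) * t - 2 * t) with (2 * INR K * t) by ring.
    rewrite sin_0; ring.
  - intros i _; unfold u; rewrite S_INR.
    replace (2 * (INR i + 1) * t - 2 * t) with ((2 * INR i - 1) * t + t) by ring.
    replace (2 * INR i * t - 2 * t) with ((2 * INR i - 1) * t - t) by ring.
    rewrite sin_plus, sin_minus; ring.
Qed.

(** * Sums over the nodes *)

Definition node (K j : nat) : R := PI * (2 * INR j - 1) / (2 * INR K).

Lemma node_IZR K j : PI * IZR (2 * Z.of_nat j - 1) / (2 * IZR (Z.of_nat K)) = node K j.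
Proof. unfold node; rewrite minus_IZR, mult_IZR, <- !INR_IZR_INZ; reflexivity. Qed.

Lemma cos_mul_node (h : Z) K j : (0 < K)%nat -> Z.odd h = true ->
  cos (INR K * (IZR h * node K j)) = 0.
Proof.
  intros HK Hh.
  replace (INR K * (IZR h * node K j)) with (IZR (h * (2 * Z.of_nat j - 1)) * PI / 2).
  - apply cos_odd_mult_PI2; rewrite Z.odd_mul, Hh, Z.odd_sub, Z.odd_mul; reflexivity.
  - rewrite mult_IZR, minus_IZR, mult_IZR, <- INR_IZR_INZ; unfold node.
    field; apply not_0_INR; lia.
Qed.

Lemma sin_node_neq0 K j : (1 <= j <= K)%nat -> sin (node K j) <> 0.
Proof.
  intros Hj; apply Rgt_not_eq, sin_gt_0; unfold node.
  - assert (1 <= INR j) by (apply (le_INR 1); lia).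
    assert (0 < INR K) by (apply lt_0_INR; lia).
    apply Rdiv_lt_0_compat; [apply Rmult_lt_0_compat; [exact PI_RGT_0|]|]; lra.
  - assert (INR j <= INR K) by (apply le_INR; lia).
    assert (0 < INR K) by (apply lt_0_INR; lia).
    apply Rmult_lt_reg_r with (2 * INR K); [lra|].
    unfold Rdiv; rewrite Rmult_assoc, Rinv_l by lra.
    pose proof PI_RGT_0; nra.
Qed.

Lemma cos_mul_node_neq0 (h : Z) K j : Z.gcd h (Z.of_nat K) = 1%Z -> (1 <= j <= K)%nat ->
  (2 * j <> K + 1)%nat -> cos (IZR h * node K j) <> 0.
Proof.
  intros Hg Hj Hmid Hc; apply cos_eq_0_0 in Hc as [n Hn].
  assert (HK : INR K <> 0) by (apply not_0_INR; lia).
  assert (Heq : (h * (2 * Z.of_nat j - 1) = Z.of_nat K * (2 * n + 1))%Z).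
  { apply eq_IZR; rewrite !mult_IZR, minus_IZR, plus_IZR, mult_IZR, <- !INR_IZR_INZ.
    apply Rmult_eq_reg_r with (PI / (2 * INR K)); [|apply Rgt_not_eq, Rdiv_lt_0_compat;
      [exact PI_RGT_0 | apply Rmult_lt_0_compat; [lra | apply lt_0_INR; lia]]].
    replace (IZR h * (2 * INR j - 1) * (PI / (2 * INR K))) with (IZR h * node K j)
      by (unfold node; field; exact HK).
    rewrite Hn, mult_IZR; field; exact HK. }
  assert (Hdvd : (Z.of_nat K | 2 * Z.of_nat j - 1)%Z).
  { apply Z.gauss with h; [exists (2 * n + 1)%Z; lia | rewrite Z.gcd_comm; exact Hg]. }
  destruct Hdvd as [c Hc].
  assert (c = 1)%Z as -> by (assert (0 < c)%Z by nia; assert (c < 2)%Z by nia; lia).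
  lia.
Qed.

Definition cos_node_sum (K : nat) (N : Z) : R := rsum (fun j => cos (2 * IZR N * node K j)) 1 K.

Lemma cos_node_sum_mul K q : (0 < K)%nat ->
  cos_node_sum K (Z.of_nat K * q) = INR K * parity_sign q.
Proof.
  intros HK; unfold cos_node_sum; rewrite <- rsum_const with (a := 1%nat).
  apply rsum_ext; intros j _.
  replace (2 * IZR (Z.of_nat K * q) * node K j) with (IZR ((2 * Z.of_nat j - 1) * q) * PI).
  - rewrite cos_IZR_mult_PI; unfold parity_sign.
    rewrite Z.even_mul, Z.even_sub, Z.even_mul; reflexivity.
  - unfold node; rewrite !mult_IZR, minus_IZR, mult_IZR, <- !INR_IZR_INZ.
    field; apply not_0_INR; lia.
Qed.

Lemma cos_node_sum_ndvd K N : (0 < K)%nat -> ~ (Z.of_nat K | N)%Z -> cos_node_sum K N = 0.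
Proof.
  intros HK Hndvd; unfold cos_node_sum.
  assert (HK0 : INR K <> 0) by (apply not_0_INR; lia).
  set (t := IZR N * PI / INR K).
  assert (Hs : sin t <> 0).
  { intros Hs; apply sin_eq_0_0 in Hs as [n Hn]; apply Hndvd; exists n.
    apply eq_IZR; rewrite mult_IZR, <- INR_IZR_INZ.
    replace (IZR N) with (t * INR K / PI) by (unfold t; field; split; [exact HK0 | exact PI_neq0]).
    rewrite Hn; field; exact PI_neq0. }
  assert (Hsum := sin_mul_rsum_cos_odd K t).
  replace (2 * INR K * t) with (IZR (2 * N) * PI) in Hsum
    by (unfold t; rewrite mult_IZR; field; exact HK0).
  rewrite sin_IZR_mult_PI in Hsum.
  rewrite (rsum_ext _ (fun j => cos ((2 * INR j - 1) * t))).
  - apply Rmult_integral in Hsum as [H|H]; [lra | exact H].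
  - intros j _; unfold node, t; f_equal; field; exact HK0.
Qed.

Lemma cos_node_sum_near K q s : (0 < K)%nat -> (Z.abs s < Z.of_nat K)%Z ->
  cos_node_sum K (Z.of_nat K * q + s) = if Z.eqb s 0 then INR K * parity_sign q else 0.
Proof.
  intros HK Hs; destruct (Z.eqb_spec s 0) as [->|Hs0].
  - rewrite Z.add_0_r; apply cos_node_sum_mul, HK.
  - apply cos_node_sum_ndvd; [exact HK|]; intros Hdvd.
    apply (Z.divide_add_cancel_r _ _ _ (Z.divide_factor_l _ q)) in Hdvd as [c Hc].
    destruct (Z.lt_trichotomy c 0) as [Hc0|[Hc0|Hc0]]; nia.
Qed.

Lemma mul_mod_neq0 (h : Z) K j : Z.gcd h (Z.of_nat K) = 1%Z -> (1 <= j <= K - 1)%nat ->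
  ((h * Z.of_nat j) mod Z.of_nat K <> 0)%Z.
Proof.
  intros Hg Hj Hmod; apply Z.mod_divide in Hmod; [|lia].
  apply Z.gauss in Hmod as [c Hc]; [|rewrite Z.gcd_comm; exact Hg].
  destruct (Z.le_gt_cases c 0); nia.
Qed.

Lemma sin_mul_sin x y : sin x * sin y = (cos (x - y) - cos (x + y)) / 2.
Proof. rewrite cos_minus, cos_plus; field. Qed.

Lemma rsum_sin_node_products (h : Z) (K a : nat) : (0 < K)%nat ->
  Z.gcd h (Z.of_nat K) = 1%Z -> (1 <= a <= K - 1)%nat ->
  rsum (fun b => rsum (fun j => sin (2 * INR a * (IZR h * node K j))
                                * sin (2 * INR b * node K j)) 1 K) 1 (K - 1)
  = INR K * parity_sign (floorQ h (Z.of_nat a) (Z.of_nat K)).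
Proof.
  intros HK Hg Ha; unfold floorQ.
  set (k := Z.of_nat K); set (f := (h * Z.of_nat a / k)%Z); set (r := (h * Z.of_nat a mod k)%Z).
  assert (Hdm : (h * Z.of_nat a = k * f + r)%Z) by (apply Z.div_mod; lia).
  assert (Hr : (0 < r < k)%Z).
  { pose proof (Z.mod_pos_bound (h * Z.of_nat a) k ltac:(lia)).
    pose proof (mul_mod_neq0 h K a Hg Ha) as Hne; fold k r in Hne; lia. }
  clearbody f r.
  rewrite (rsum_ext _ (fun b => / 2 *
      ((if Z.eqb (r - Z.of_nat b) 0 then INR K * parity_sign f else 0)
       - (if Z.eqb (r + Z.of_nat b - k) 0 then INR K * parity_sign (f + 1) else 0)))).
  2:{ intros b Hb.
      rewrite <- (cos_node_sum_near K f (r - Z.of_nat b)), <- (cos_node_sum_near K (f + 1))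
        by (auto; fold k; lia).
      unfold cos_node_sum; rewrite <- rsum_sub, <- rsum_scal_l; apply rsum_ext; intros j _.
      rewrite sin_mul_sin; fold k.
      replace (k * f + (r - Z.of_nat b))%Z with (h * Z.of_nat a - Z.of_nat b)%Z by lia.
      replace (k * (f + 1) + (r + Z.of_nat b - k))%Z with (h * Z.of_nat a + Z.of_nat b)%Z by lia.
      rewrite minus_IZR, plus_IZR, mult_IZR, <- !INR_IZR_INZ.
      unfold Rdiv; rewrite Rmult_comm; do 3 f_equal; ring. }
  rewrite rsum_scal_l, rsum_sub.
  (* Only b = r and b = K - r survive. *)
  rewrite (rsum_single _ 1 (K - 1) (Z.to_nat r)), (rsum_single _ 1 (K - 1) (Z.to_nat (k - r))).
  - replace (r - Z.of_nat (Z.to_nat r))%Z with 0%Z by lia.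
    replace (r + Z.of_nat (Z.to_nat (k - r)) - k)%Z with 0%Z by lia.
    rewrite parity_sign_add, Z.eqb_refl; change (parity_sign 1) with (-1); field.
  - lia.
  - intros b _ Hb; destruct (Z.eqb_spec (r + Z.of_nat b - k) 0); [lia | reflexivity].
  - lia.
  - intros b _ Hb; destruct (Z.eqb_spec (r - Z.of_nat b) 0); [lia | reflexivity].
Qed.

Lemma tan_cot_node (h : Z) (K j : nat) : Nat.Odd K -> Z.gcd h (Z.of_nat K) = 1%Z ->
  Z.odd h = true -> (1 <= j <= K)%nat ->
  (if Z.eqb (2 * Z.of_nat j) (Z.of_nat K + 1) then 0
   else tan (IZR h * node K j) * cot (node K j))
  = 2 / INR K * rsum (fun a => INR a * (-1) ^ a * sin (2 * INR a * (IZR h * node K j))) 1 (K - 1)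
    * rsum (fun b => sin (2 * INR b * node K j)) 1 (K - 1).
Proof.
  intros HK Hg Hh Hj; assert (HK0 : (0 < K)%nat) by (destruct HK; lia).
  destruct (Z.eqb_spec (2 * Z.of_nat j) (Z.of_nat K + 1)) as [Hmid|Hmid].
  - rewrite (rsum_eq0 (fun b => sin (2 * INR b * node K j))); [ring|].
    intros b _; replace (2 * INR b * node K j) with (IZR (Z.of_nat b) * PI).
    + apply sin_IZR_mult_PI.
    + assert (Hnode : 2 * INR j - 1 = INR K) by
        (rewrite !INR_IZR_INZ, <- mult_IZR, <- minus_IZR; f_equal; lia).
      unfold node; rewrite Hnode, <- INR_IZR_INZ; field; apply not_0_INR; lia.
  - assert (Hcos := cos_mul_node 1 K j HK0 eq_refl); rewrite Rmult_1_l in Hcos.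
    assert (Hcot : cot (node K j) = rsum (fun b => sin (2 * INR b * node K j)) 1 (K - 1)).
    { pose proof (sin_node_neq0 K j Hj).
      unfold cot; rewrite <- (sin_mul_rsum_sin K _ HK0 Hcos); field; auto. }
    rewrite Hcot, (tan_as_rsum K); auto.
    + apply cos_mul_node; auto.
    + apply cos_mul_node_neq0; auto; lia.
Qed.

Lemma tan_cot_sum_eq (h : Z) (K : nat) : Nat.Odd K -> Z.gcd h (Z.of_nat K) = 1%Z ->
  Z.odd h = true ->
  tan_cot_sum h (Z.of_nat K) = 2 * rsum (fun a => INR a *
    parity_sign (Z.of_nat a + floorQ h (Z.of_nat a) (Z.of_nat K))) 1 (K - 1).
Proof.
  intros HK Hg Hh; assert (HK0 : (0 < K)%nat) by (destruct HK; lia).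
  unfold tan_cot_sum; rewrite Nat2Z.id.
  change (fold_right Rplus 0 (map ?F (seq 1 K))) with (rsum F 1 K).
  rewrite (rsum_ext _ (fun j =>
    2 / INR K * rsum (fun a => rsum (fun b => INR a * (-1) ^ a *
      (sin (2 * INR a * (IZR h * node K j)) * sin (2 * INR b * node K j))) 1 (K - 1)) 1 (K - 1))).
  2:{ intros j Hj; rewrite !node_IZR.
      replace (PI * IZR h * IZR (2 * Z.of_nat j - 1) / (2 * IZR (Z.of_nat K)))
        with (IZR h * node K j) by (rewrite <- node_IZR; unfold Rdiv; ring).
      rewrite tan_cot_node, Rmult_assoc, rsum_mul by (auto; lia).
      f_equal; apply rsum_ext; intros a _; apply rsum_ext; intros b _; ring. }
  rewrite rsum_scal_l, rsum_swap.
  rewrite (rsum_ext _ (fun a => INR K * (INR a * parity_sign (Z.of_nat a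
    + floorQ h (Z.of_nat a) (Z.of_nat K))))).
  - rewrite rsum_scal_l; field; apply not_0_INR; lia.
  - intros a Ha; rewrite rsum_swap, parity_sign_add, <- pow_m1_parity_sign.
    replace (INR K * (INR a * ((-1) ^ a * parity_sign (floorQ h (Z.of_nat a) (Z.of_nat K)))))
      with (INR a * (-1) ^ a * (INR K * parity_sign (floorQ h (Z.of_nat a) (Z.of_nat K))))
      by ring.
    rewrite <- rsum_sin_node_products, <- rsum_scal_l by (auto; lia).
    apply rsum_ext; intros b _; apply rsum_scal_l.
Qed.

(** * Floor sums *)

Lemma B_one_eq (h : Z) (K : nat) :
  IZR (B_one h (Z.of_nat K)) = rsum (fun j => IZR (floorQ h (Z.of_nat j) (Z.of_nat K))
    * parity_sign (Z.of_nat j + floorQ h (Z.of_nat j) (Z.of_nat K))) 1 (K - 1).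
Proof.
  unfold B_one, rsum; replace (Z.to_nat (Z.of_nat K - 1)) with (K - 1)%nat by lia.
  induction (seq 1 (K - 1)) as [|j l IH]; [reflexivity|].
  simpl; rewrite plus_IZR, IH; unfold parity_sign.
  destruct (Z.even _); [ring | rewrite opp_IZR; ring].
Qed.

Lemma rsum_mul_mod (h : Z) (K : nat) (G : Z -> R) : Z.gcd h (Z.of_nat K) = 1%Z ->
  rsum (fun j => G ((h * Z.of_nat j) mod Z.of_nat K)%Z) 1 (K - 1)
  = rsum (fun j => G (Z.of_nat j)) 1 (K - 1).
Proof.
  intros Hg.
  assert (Hbound : forall j, (1 <= j < 1 + (K - 1))%nat ->
            (0 < (h * Z.of_nat j) mod Z.of_nat K < Z.of_nat K)%Z).
  { intros j Hj; pose proof (mul_mod_neq0 h K j Hg ltac:(lia)).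
    pose proof (Z.mod_pos_bound (h * Z.of_nat j) (Z.of_nat K) ltac:(lia)); lia. }
  set (sigma j := Z.to_nat ((h * Z.of_nat j) mod Z.of_nat K)).
  rewrite <- (rsum_permute sigma (fun i => G (Z.of_nat i))).
  - apply rsum_ext; intros j Hj; unfold sigma.
    rewrite Z2Nat.id by (specialize (Hbound j Hj); lia); reflexivity.
  - intros j Hj; unfold sigma; specialize (Hbound j Hj); lia.
  - intros i j Hi Hj Hij; unfold sigma in Hij.
    pose proof (Hbound i Hi); pose proof (Hbound j Hj).
    apply Z2Nat.inj in Hij; try lia.
    assert (Hdvd : (Z.of_nat K | h * (Z.of_nat i - Z.of_nat j))%Z).
    { apply Z.mod_divide; [lia|].
      rewrite Z.mul_sub_distr_l, Zminus_mod, Hij, Z.sub_diag; reflexivity. }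
    apply Z.gauss in Hdvd as [c Hc]; [|rewrite Z.gcd_comm; exact Hg].
    destruct (Z.lt_trichotomy c 0) as [Hc0|[Hc0|Hc0]]; nia.
Qed.

Lemma rsum_parity_sign_id (m : nat) :
  rsum (fun j => parity_sign (Z.of_nat j) * INR j) 1 (2 * m) = INR m.
Proof.
  induction m as [|m IH]; [reflexivity|].
  replace (2 * S m)%nat with (S (S (2 * m))) by lia.
  rewrite !rsum_S_r, IH; unfold parity_sign.
  replace (Z.of_nat (1 + 2 * m)) with (1 + 2 * Z.of_nat m)%Z by lia.
  replace (Z.of_nat (1 + S (2 * m))) with (2 * (Z.of_nat m + 1))%Z by lia.
  rewrite Z.even_add_mul_2, Z.even_mul.
  change (Z.even 1) with false; change (Z.even 2) with true; cbn [orb].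
  rewrite !plus_INR, !S_INR, mult_INR; change (INR 1) with 1; change (INR 2) with 2; ring.
Qed.

Lemma even_sub_mul_odd (h k j f : Z) : Z.odd h = true -> Z.odd k = true ->
  Z.even (h * j - k * f) = Z.even (j + f).
Proof.
  intros Hh Hk; rewrite Z.even_sub, !Z.even_mul, Z.even_add.
  rewrite <- (Z.negb_odd h), <- (Z.negb_odd k), Hh, Hk; simpl.
  destruct (Z.even j), (Z.even f); reflexivity.
Qed.

Lemma floor_sums_relation (h : Z) (K m : nat) : K = (2 * m + 1)%nat ->
  Z.gcd h (Z.of_nat K) = 1%Z -> Z.odd h = true ->
  IZR h * rsum (fun a => INR a
    * parity_sign (Z.of_nat a + floorQ h (Z.of_nat a) (Z.of_nat K))) 1 (K - 1)
  - INR K * rsum (fun j => IZR (floorQ h (Z.of_nat j) (Z.of_nat K))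
    * parity_sign (Z.of_nat j + floorQ h (Z.of_nat j) (Z.of_nat K))) 1 (K - 1)
  = INR m.
Proof.
  intros HKm Hg Hh; unfold floorQ.
  assert (HKodd : Z.odd (Z.of_nat K) = true).
  { replace (Z.of_nat K) with (1 + 2 * Z.of_nat m)%Z by lia; apply Z.odd_add_mul_2. }
  rewrite <- !rsum_scal_l, <- rsum_sub.
  pose (G z := parity_sign z * IZR z).
  rewrite (rsum_ext _ (fun j => G ((h * Z.of_nat j) mod Z.of_nat K)%Z)).
  - rewrite rsum_mul_mod by exact Hg.
    replace (K - 1)%nat with (2 * m)%nat by lia.
    rewrite <- rsum_parity_sign_id; apply rsum_ext; intros j _.
    unfold G; rewrite <- INR_IZR_INZ; reflexivity.
  - intros j _; unfold G; rewrite Zmod_eq_full by lia; unfold parity_sign.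
    rewrite (Z.mul_comm (h * Z.of_nat j / Z.of_nat K)), even_sub_mul_odd by assumption.
    rewrite minus_IZR, !mult_IZR, <- !INR_IZR_INZ.
    destruct (Z.even _); ring.
Qed.

Theorem theorem24 (h k : Z) :
  (0 < k)%Z -> (Z.gcd h k = 1)%Z -> Z.odd h = true -> Z.odd k = true ->
  IZR (B_one h k) =
    IZR h / (2 * IZR k) * tan_cot_sum h k + 1 / (2 * IZR k) - 1 / 2.
Proof.
  intros Hk Hg Hh Hko; apply Z.odd_spec in Hko as [n Hn].
  set (m := Z.to_nat n); set (K := (2 * m + 1)%nat).
  replace k with (Z.of_nat K) in * by (unfold K, m; lia).
  assert (HK : Nat.Odd K) by (exists m; reflexivity).
  pose proof (floor_sums_relation h K m eq_refl Hg Hh) as Hrel.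
  rewrite B_one_eq, tan_cot_sum_eq, <- INR_IZR_INZ by auto.
  assert (HKm : INR K = 2 * INR m + 1) by (unfold K; rewrite plus_INR, mult_INR; simpl; ring).
  assert (0 <= INR m) by apply pos_INR.
  rewrite HKm in *; field_simplify_eq; lra.
Qed.
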